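(* Let $p>2$ be a prime. Define the sequence $(x_1,\ldots,x_p)$ of elements of $\mathbb{F}_p$ by $x_1=0$, and $x_{2j}=j$, $x_{2j+1}=p-j$ for $1\le j\le (p-1)/2$ (so the sequence is $(0,1,p-1,2,p-2,\ldots)$). Then this sequence is a sequencing of the sharply $2$-transitive action of the affine group $\mathrm{Aff}(\mathbb{F}_p)=\{x\mapsto ax+b : a\in\mathbb{F}_p^*,\ b\in\mathbb{F}_p\}$ on $\mathbb{F}_p$. In particular, a $(p,3)$-permutation design exists for every odd prime $p$.
   Context: For a group $G$ acting sharply $k$-transitively on an $n$-element set $X$ (for any two ordered $k$-tuples of distinct elements there is exactly one $g\in G$ mapping the first to the second coordinatewise), a sequencing of $X$ is an enumeration $(x_1,\ldots,x_n)$ of all elements of $X$ such that the $n-k$ tuples $(x_1,\ldots,x_{k+1}),\ldots,(x_{n-k},\ldots,x_n)$ lie in pairwise distinct orbits of $G$ acting coordinatewise on ordered $(k+1)$-tuples of distinct elements of $X$. An $(n,t)$-permutation design is a set of $n(n-1)\cdots(n-t+2)$ permutations of an $n$-set (each written as a sequence of all $n$ elements) such that every ordered $t$-tuple of distinct elements occurs exactly once as a contiguous subsequence of one of the permutations. *)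

From mathcomp Require Import all_boot all_order all_algebra.
Set Implicit Arguments. Unset Strict Implicit. Unset Printing Implicit Defensive.
Import GRing.Theory.
Local Open Scope ring_scope.

Definition window (X : Type) (k : nat) (s : seq X) (i : nat) : seq X :=
  take k.+1 (drop i s).

(* A group G (given as a predicate on maps X -> X) acting on X; s is a
   sequencing of X for G (k = degree of sharp transitivity): s enumerates all
   elements of X exactly once, and the n-k windows of length k+1 lie in
   pairwise distinct G-orbits (coordinatewise action). *)
Definition sequencing (X : finType) (G : (X -> X) -> Prop) (k : nat)
    (s : seq X) : Prop :=
  perm_eq s (enum X) /\
  forall i j : nat, (i < j)%N -> (j < #|X| - k)%N ->
    ~ (exists g : X -> X, G g /\ map g (window k s i) = window k s j).

Definition affine_map (p : nat) (g : 'F_p -> 'F_p) : Prop :=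
  exists (a b : 'F_p), a != 0 /\ forall x, g x = a * x + b.

(* x_1 = 0, x_{2j} = j, x_{2j+1} = p - j (1-indexed). *)
Definition xval (p : nat) (i : nat) : 'F_p :=
  if i == 1%N then 0
  else if odd i then (p - i./2)%:R else (i./2)%:R.

Definition xseq (p : nat) : seq 'F_p := [seq xval p i | i <- iota 1 p].

(* An (n,t)-permutation design on the n-set X: a set D (duplicate-free list)
   of n(n-1)...(n-t+2) = n ^_ (t-1) permutations of X (each a sequence listing
   all elements of X once) such that every ordered t-tuple of distinct
   elements occurs exactly once as a contiguous subsequence of some member. *)
Definition perm_design (X : finType) (t : nat) (D : seq (seq X)) : Prop :=
  uniq D /\ size D = (#|X| ^_ t.-1)%N /\
  (forall s, s \in D -> perm_eq s (enum X)) /\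
  forall u : seq X, size u = t -> uniq u ->
    count (fun s => infix u s) D = 1%N.

From mathcomp Require Import all_boot all_order all_algebra ring zify.
Set Implicit Arguments.
Unset Strict Implicit.
Unset Printing Implicit Defensive.
Import GRing.Theory.
Local Open Scope ring_scope.

(* An affine map x |-> a x + b (a != 0) preserves the ratio (y - x) / (z - x)
   of a triple, and conversely two triples with x != y and equal ratios are
   exchanged by exactly one affine map, namely the one matching their first
   two entries.  The window (x_m, x_(m+1), x_(m+2)) of the alternating
   sequence has ratio -m, so its p - 2 windows realise each of the p - 2
   ratios other than 0 and 1 exactly once.  Hence the windows lie in distinct
   orbits, and the affine images of the sequence contain every triple of
   distinct elements exactly once as a window. *)

Lemma window3E (T : Type) (x0 : T) (s : seq T) i : (i.+2 < size s)%N ->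
  window 2 s i = [:: nth x0 s i; nth x0 s i.+1; nth x0 s i.+2].
Proof.
move=> lt_is; have lt_i1s : (i.+1 < size s)%N by apply: ltnW.
by rewrite /window (drop_nth x0 (ltnW lt_i1s)) (drop_nth x0 lt_i1s) (drop_nth x0 lt_is) /= take0.
Qed.

Lemma infix_map_windowP (T U : eqType) (g : T -> U) (s : seq T) (u : seq U) k :
  size u = k.+1 ->
  reflect (exists2 i, (i + k < size s)%N & map g (window k s i) = u)
          (infix u (map g s)).
Proof.
move=> size_u; apply: (iffP (@infixP _ u (map g s))) => [[l1 [l2 def_s]] | [i lt_is <-]].
  have := congr1 size def_s; rewrite size_map !size_cat size_u => size_s.
  exists (size l1); first lia.
  by rewrite /window map_take map_drop def_s drop_size_cat // -size_u take_size_cat.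
exists (take i (map g s)), (drop k.+1 (drop i (map g s))).
by rewrite /window map_take map_drop !cat_take_drop.
Qed.

Section AffineMaps.

Variable F : fieldType.

Definition aff (ab : F * F) (x : F) : F := ab.1 * x + ab.2.

Definition aff_ratio (x y z : F) : F := (y - x) / (z - x).

Lemma aff_ratio_aff ab x y z :
  ab.1 != 0 -> aff_ratio (aff ab x) (aff ab y) (aff ab z) = aff_ratio x y z.
Proof.
move=> a_neq0; have affB v : aff ab v - aff ab x = ab.1 * (v - x).
  by rewrite /aff; ring.
by rewrite /aff_ratio !affB invfM mulrACA divff // mul1r.
Qed.

Lemma aff_ratio_eq0 x y z : (aff_ratio x y z == 0) = (y == x) || (z == x).
Proof. by rewrite mulf_eq0 invr_eq0 !subr_eq0. Qed.

Lemma aff_ratio_eq1 x y z : z != x -> (aff_ratio x y z == 1) = (y == z).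
Proof.
rewrite -subr_eq0 => zx_neq0; rewrite /aff_ratio.
apply/eqP/eqP => [ratio1 | ->]; last exact: divff.
by apply: (addIr (- x)); rewrite -[y - x](divfK zx_neq0) ratio1 mul1r.
Qed.

Lemma aff_ratio_inj x y : x != y -> injective (aff_ratio x y).
Proof.
rewrite eq_sym -subr_eq0 => yx_neq0 z z' /(mulfI yx_neq0)/invr_inj; exact: addIr.
Qed.

Lemma aff_inj ab : ab.1 != 0 -> injective (aff ab).
Proof. by move=> a_neq0 x y /addIr/(mulfI a_neq0). Qed.

Lemma aff_eq2 ab cd x y :
  x != y -> aff ab x = aff cd x -> aff ab y = aff cd y -> ab = cd.
Proof.
case: ab cd => [a b] [c d]; rewrite /aff /= eq_sym -subr_eq0 => yx_neq0 ex ey.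
have ac : a = c.
  apply: (mulIf yx_neq0); transitivity ((a * y + b) - (a * x + b)); first by ring.
  by rewrite ex ey; ring.
by rewrite -ac in ex; rewrite ac (addrI _ ex).
Qed.

Definition aff_through (x y u v : F) : F * F :=
  let a := (v - u) / (y - x) in (a, u - a * x).

Lemma aff_through_neq0 x y u v : x != y -> u != v -> (aff_through x y u v).1 != 0.
Proof.
by rewrite eq_sym -subr_eq0 => ? ?; rewrite mulf_neq0 ?invr_eq0 // subr_eq0 eq_sym.
Qed.

Lemma aff_throughE x y u v :
  x != y -> aff (aff_through x y u v) x = u /\ aff (aff_through x y u v) y = v.
Proof.
rewrite eq_sym -subr_eq0 => yx_neq0; rewrite /aff /=; split; first by rewrite addrC subrK.
by rewrite addrCA -mulrBr divfK // addrC subrK.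
Qed.

Lemma aff_map3E ab x y z u v w :
  ab.1 != 0 -> x != y -> aff_ratio x y z = aff_ratio u v w ->
  (map (aff ab) [:: x; y; z] == [:: u; v; w]) = (ab == aff_through x y u v).
Proof.
move=> a_neq0 xy ratio_eq; set ab0 := aff_through x y u v.
have [ex ey] : aff ab0 x = u /\ aff ab0 y = v by apply: aff_throughE.
apply/eqP/eqP => [[eu ev _] | def_ab]; first by apply: (aff_eq2 xy); rewrite ?ex ?ey.
rewrite {ab}def_ab in a_neq0 *.
have uv : u != v by rewrite -ex -ey (inj_eq (aff_inj a_neq0)).
congr [:: _; _; _] => //; apply: (aff_ratio_inj uv).
by rewrite -{1}ex -{1}ey aff_ratio_aff.
Qed.

End AffineMaps.

Section AffineDesign.

Variable F : finFieldType.

Definition window_ratio (s : seq F) i : F := aff_ratio s`_i s`_i.+1 s`_i.+2.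

Definition aff_group : {set F * F} := setX [set~ 0] [set: F].

Definition aff_design (s : seq F) : seq (seq F) :=
  [seq map (aff ab) s | ab <- enum aff_group].

Lemma mem_aff_group ab : (ab \in aff_group) = (ab.1 != 0).
Proof. by case: ab => a b; rewrite in_setX in_setC1 in_setT andbT. Qed.

Lemma aff_design_uniq s : uniq s -> (1 < size s)%N -> uniq (aff_design s).
Proof.
move=> s_uniq s_gt1; rewrite map_inj_in_uniq ?enum_uniq // => ab cd _ _ eq_ab_cd.
have s01 : s`_0 != s`_1 by rewrite nth_uniq // ltnW.
by apply: (aff_eq2 s01); rewrite -!(nth_map 0 0) ?eq_ab_cd // ltnW.
Qed.

Lemma size_aff_design s : size (aff_design s) = (#|F| ^_ 2)%N.
Proof.
by rewrite size_map -cardE cardsX cardsC1 cardsT ffactnS ffactn1 mulnC.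
Qed.

Lemma aff_design_perm s t :
  perm_eq s (enum F) -> t \in aff_design s -> perm_eq t (enum F).
Proof.
move=> s_enum /mapP[ab]; rewrite mem_enum mem_aff_group => a_neq0 ->.
apply: perm_trans (perm_map _ s_enum) _; have aff_ab_inj := aff_inj a_neq0.
apply: uniq_perm; rewrite ?map_inj_uniq -?enumT ?enum_uniq // => x.
by rewrite mem_enum -codomE injF_onto.
Qed.

Lemma count_aff_design s u1 u2 u3 :
  uniq s -> u1 != u2 ->
  (exists! i, (i.+2 < size s)%N /\ window_ratio s i = aff_ratio u1 u2 u3) ->
  count (infix [:: u1; u2; u3]) (aff_design s) = 1%N.
Proof.
move=> s_uniq u12 [i [[lt_is ratio_i] i_unique]].
have si_neq : s`_i != s`_i.+1 by rewrite nth_uniq ?ltn_eqF ?(ltnW lt_is) ?(ltnW (ltnW lt_is)).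
set ab0 := aff_through s`_i s`_i.+1 u1 u2.
rewrite count_map (eq_in_count (a2 := pred1 ab0)) => [|ab].
  by rewrite count_uniq_mem ?enum_uniq // mem_enum mem_aff_group aff_through_neq0.
rewrite mem_enum mem_aff_group => a_neq0 /=.
have size_u : size [:: u1; u2; u3] = 3%N by [].
apply/(infix_map_windowP (aff ab) s size_u)/eqP => [[j] | ->].
  rewrite addn2 => lt_js; rewrite (window3E 0) // => map_j.
  have ratio_j : window_ratio s j = aff_ratio u1 u2 u3.
    by case: map_j => <- <- <-; rewrite aff_ratio_aff.
  have ij : i = j by apply: i_unique.
  by move/eqP: map_j; rewrite -ij aff_map3E // => /eqP.
exists i; rewrite ?addn2 // (window3E 0) //.
by apply/eqP; rewrite aff_map3E ?aff_through_neq0.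
Qed.

Lemma aff_design_perm_design s :
  perm_eq s (enum F) ->
  (forall r, r != 0 -> r != 1 ->
     exists! i, (i.+2 < size s)%N /\ window_ratio s i = r) ->
  perm_design 3 (aff_design s).
Proof.
move=> s_enum ratio_onto.
have s_uniq : uniq s by rewrite (perm_uniq s_enum) enum_uniq.
have size_s : size s = #|F| by rewrite (perm_size s_enum) cardE.
split; first by apply: aff_design_uniq; rewrite // size_s card_finNzRing_gt1.
split; first exact: size_aff_design.
split; first by move=> t; apply: aff_design_perm.
case=> [|u1 [|u2 [|u3 []]]] //= _; rewrite !inE negb_or andbT => /andP[/andP[u12 u13] u23].
apply: count_aff_design => //; apply: ratio_onto.
  by rewrite aff_ratio_eq0 negb_or !(eq_sym _ u1) u12 u13.
by rewrite aff_ratio_eq1 // eq_sym.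
Qed.

End AffineDesign.

Lemma window_ratio_sequencing p (s : seq 'F_p) :
  perm_eq s (enum 'F_p) ->
  {in [pred i | (i.+2 < size s)%N] &, injective (window_ratio s)} ->
  sequencing (@affine_map p) 2 s.
Proof.
move=> s_enum ratio_inj; split => // i j lt_ij.
rewrite cardE -(perm_size s_enum) => lt_js [g [[a [b [a_neq0 gE]]] map_ij]].
have lt_j2s : (j.+2 < size s)%N by move: lt_js; rewrite ltn_subRL add2n.
have lt_i2s : (i.+2 < size s)%N by apply: ltn_trans lt_j2s.
move: map_ij; rewrite !(window3E 0) // (eq_map (gE : g =1 aff (a, b))) => -[ei ej ek].
have : window_ratio s i = window_ratio s j.
  by rewrite /window_ratio -ei -ej -ek aff_ratio_aff.
by move/ratio_inj => /(_ lt_i2s lt_j2s) eq_ij; rewrite eq_ij ltnn in lt_ij.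
Qed.

Section AlternatingSequence.

Variable p : nat.
Hypothesis p_prime : prime p.

Lemma natr_Fp_inj m n : (m%:R : 'F_p) = n%:R -> (m < p)%N -> (n < p)%N -> m = n.
Proof.
by move=> /(congr1 val); rewrite /= !val_Fp_nat // => + ? ?; rewrite !modn_small.
Qed.

Lemma xvalE i : (i <= p)%N -> xval p i = (-1) ^+ i * (i./2)%:R.
Proof.
move=> le_ip; rewrite /xval -signr_odd.
case: ifP => [/eqP-> | _]; first by rewrite mulr0.
have le_half_p : (i./2 <= p)%N by rewrite leq_half_double; lia.
by case: odd; rewrite ?natrB // ?(pchar_Fp_0 p_prime) ?sub0r ?mulN1r ?mul1r.
Qed.

Lemma size_xseq : size (xseq p) = p.
Proof. by rewrite size_map size_iota. Qed.

Lemma nth_xseq i : (i < p)%N -> (xseq p)`_i = xval p i.+1.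
Proof. by move=> lt_ip; rewrite (nth_map 0%N) ?size_iota // nth_iota // add1n. Qed.

Lemma xseq_uniq : uniq (xseq p).
Proof.
rewrite map_inj_in_uniq ?iota_uniq // => i j.
rewrite !mem_iota !add1n !ltnS => /andP[i_gt0 le_ip] /andP[j_gt0 le_jp].
rewrite !xvalE // -(signr_odd _ i) -(signr_odd _ j).
have := odd_double_half i; have := odd_double_half j.
case: (odd i) (odd j) => [] [] /= def_j def_i; rewrite ?mulN1r ?mul1r.
- by move/oppr_inj/natr_Fp_inj; lia.
- by move/eqP; rewrite eq_sym -subr_eq0 opprK -natrD => /eqP/(natr_Fp_inj (n := 0)); lia.
- by move/eqP; rewrite -subr_eq0 opprK -natrD => /eqP/(natr_Fp_inj (n := 0)); lia.
- by move/natr_Fp_inj; lia.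
Qed.

Lemma xseq_perm : perm_eq (xseq p) (enum 'F_p).
Proof.
have size_enum : size (enum 'F_p) = size (xseq p) by rewrite -cardE card_Fp ?size_xseq.
have [_ xseq_eq_enum] := uniq_min_size xseq_uniq (fun x _ => mem_enum 'F_p x) (eq_leq size_enum).
by apply: uniq_perm xseq_uniq (enum_uniq _) xseq_eq_enum.
Qed.

Lemma window_ratio_xseq i : (i.+2 < p)%N -> window_ratio (xseq p) i = - (i.+1)%:R.
Proof.
move=> lt_i2p; have lt_i1p := ltnW lt_i2p; have lt_ip := ltnW lt_i1p.
rewrite /window_ratio !nth_xseq // !xvalE //= uphalf_half !exprS.
have sign_neq0 : ((-1) ^+ i : 'F_p) != 0 by rewrite signr_eq0.
rewrite -[in RHS](odd_double_half i) -muln2 /aff_ratio.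
field; rewrite (_ : _ - _ = - (-1) ^+ i) ?oppr_eq0 //; ring.
Qed.

Lemma window_ratio_xseq_inj :
  {in [pred i | (i.+2 < size (xseq p))%N] &, injective (window_ratio (xseq p))}.
Proof.
move=> i j; rewrite !inE size_xseq => lt_i2p lt_j2p.
rewrite !window_ratio_xseq // => /oppr_inj/natr_Fp_inj.
by move=> /(_ (ltnW lt_i2p) (ltnW lt_j2p)) [].
Qed.

Lemma window_ratio_xseq_onto r : r != 0 -> r != 1 ->
  exists! i, (i.+2 < size (xseq p))%N /\ window_ratio (xseq p) i = r.
Proof.
move=> r_neq0 r_neq1; rewrite size_xseq.
pose m : nat := - r.
have mE : m%:R = - r by rewrite natr_Zp.
have lt_mp : (m < p)%N by rewrite -[p in (_ < p)%N](Fp_cast p_prime) ltn_ord.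
have m_gt0 : (0 < m)%N.
  by rewrite lt0n; apply: contra r_neq0 => /eqP m0; rewrite -oppr_eq0 -mE m0.
have lt_m1p : (m.+1 < p)%N.
  rewrite ltn_neqAle lt_mp andbT; apply: contra r_neq1 => /eqP m1p.
  by rewrite eq_sym -subr_eq0 -mE nat1r m1p (pchar_Fp_0 p_prime).
have ratio_m : window_ratio (xseq p) m.-1 = r.
  by rewrite window_ratio_xseq prednK // mE opprK.
exists m.-1; split; first by rewrite prednK.
move=> j [lt_j2p ratio_j]; apply: window_ratio_xseq_inj; rewrite ?inE ?size_xseq ?prednK //.
by rewrite ratio_m ratio_j.
Qed.

End AlternatingSequence.

Unset Implicit Arguments.

Theorem theorem4p2 (p : nat) (hp : prime p) (hp2 : (2 < p)%N) :
  sequencing (@affine_map p) 2 (xseq p) /\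
  exists D : seq (seq 'I_p), perm_design 3 D.
Proof.
(* The argument works for every prime p. *)
have xseq_enum := xseq_perm hp.
split; first exact: (window_ratio_sequencing xseq_enum (window_ratio_xseq_inj hp)).
have design_xseq := aff_design_perm_design xseq_enum (window_ratio_xseq_onto hp).
by rewrite -(Fp_cast hp); exists (aff_design (xseq p)).
Qed.
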